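(* Work in round-to-nearest mode with $u=2^{-p}$. Let $x_h,x_l,y_h,y_l\in\mathbb{F}_p$ satisfy $\mathrm{RN}(x_h+x_l)=x_h$ and $\mathrm{RN}(y_h+y_l)=y_h$, and suppose $x_h$ and $y_h$ have opposite signs. Run the sloppy addition algorithm with all operations in $\mathrm{RN}$: 1. $(s_h,s_l)=\mathrm{2Sum}(x_h,y_h)$; 2. $v=\mathrm{RN}(x_l+y_l)$; 3. $w=\mathrm{RN}(s_l+v)$; 4. $(z_h,z_l)=\mathrm{Fast2Sum}(s_h,w)$. Let $\varepsilon=\dfrac{|z_h+z_l-(x_h+x_l+y_h+y_l)|}{|x_h+x_l+y_h+y_l|}$ be its relative error. (i) If $r(x_h,y_h)\le\frac12$, then $\varepsilon\le 3u^2+O(u^3)$. (ii) If $r(x_h,y_h)>\frac12$, the tie-breaking rule of $\mathrm{RN}$ is ties-to-even or ties-to-away, and $|x_h|$ and $|y_h|$ are not two consecutive floating-point numbers, then $\varepsilon\le u$.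
   Context: $\mathbb{F}_p$ is the set of radix-2, precision-$p$ floating-point numbers with unbounded exponent range. $\mathrm{RN}$ denotes rounding to nearest (with some tie-breaking rule), and $u=2^{-p}$. For reals $x,y$, $r(x,y)=\min(|x|,|y|)/\max(|x|,|y|)$ if $xy<0$, and $r(x,y)=0$ otherwise. $\mathrm{2Sum}(a,b)$ computes, in order, $s=\mathrm{RN}(a+b)$, $a'=\mathrm{RN}(s-b)$, $b'=\mathrm{RN}(s-a')$, $\delta_a=\mathrm{RN}(a-a')$, $\delta_b=\mathrm{RN}(b-b')$, $t=\mathrm{RN}(\delta_a+\delta_b)$, and returns $(s,t)$. $\mathrm{Fast2Sum}(a,b)$ computes $s=\mathrm{RN}(a+b)$ and $t=\mathrm{RN}(b-\mathrm{RN}(s-a))$, and returns $(s,t)$. *)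

From Stdlib Require Import Reals Lra Lia ZArith.
Open Scope R_scope.

Definition u (p : nat) : R := / 2 ^ p.

(* F_p : radix-2, precision-p floating-point numbers, unbounded exponent range *)
Definition is_fp (p : nat) (x : R) : Prop :=
  exists M e : Z, x = IZR M * powerRZ 2 e /\ (Z.abs M < 2 ^ Z.of_nat p)%Z.

Definition is_RN (p : nat) (rn : R -> R) : Prop :=
  forall x, is_fp p (rn x) /\
    forall f, is_fp p f -> Rabs (rn x - x) <= Rabs (f - x).

Definition even_fp (p : nat) (f : R) : Prop :=
  exists M e : Z, f = IZR M * powerRZ 2 e /\
    (2 ^ (Z.of_nat p - 1) <= Z.abs M < 2 ^ Z.of_nat p)%Z /\ Z.Even M.

Definition ties_to_even (p : nat) (rn : R -> R) : Prop :=
  forall x f, is_fp p f -> f <> rn x -> Rabs (f - x) = Rabs (rn x - x) ->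
    even_fp p (rn x).

Definition ties_to_away (p : nat) (rn : R -> R) : Prop :=
  forall x f, is_fp p f -> Rabs (f - x) = Rabs (rn x - x) ->
    Rabs f <= Rabs (rn x).

Definition consecutive_fp (p : nat) (a b : R) : Prop :=
  is_fp p a /\ is_fp p b /\ a <> b /\
  forall f, is_fp p f -> ~ (Rmin a b < f < Rmax a b).

Definition rr (x y : R) : R :=
  if Rlt_dec (x * y) 0 then Rmin (Rabs x) (Rabs y) / Rmax (Rabs x) (Rabs y) else 0.

Definition TwoSum (rn : R -> R) (a b : R) : R * R :=
  let s := rn (a + b) in
  let a' := rn (s - b) in
  let b' := rn (s - a') in
  let da := rn (a - a') in
  let db := rn (b - b') in
  let t := rn (da + db) in
  (s, t).

Definition Fast2Sum (rn : R -> R) (a b : R) : R * R :=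
  let s := rn (a + b) in
  let t := rn (b - rn (s - a)) in
  (s, t).

Definition SloppyAdd (rn : R -> R) (xh xl yh yl : R) : R * R :=
  let (sh, sl) := TwoSum rn xh yh in
  let v := rn (xl + yl) in
  let w := rn (sl + v) in
  Fast2Sum rn sh w.

Definition sloppy_relerr (rn : R -> R) (xh xl yh yl : R) : R :=
  let z := SloppyAdd rn xh xl yh yl in
  Rabs (fst z + snd z - (xh + xl + yh + yl)) / Rabs (xh + xl + yh + yl).

(* By the symmetry x |-> -x of round-to-nearest we may assume xh > 0 > yh.

   If r(xh, yh) <= 1/2 the magnitudes differ by a factor 2, so 2Sum is exact and s = xh + yh
   satisfies |yh| <= |s|.  With 2^k <= |s| < 2^(k+1), the low-order terms are O(u 2^k), so the
   roundings producing v and w each cost at most 2 u^2 2^k.  Their sum stays below 3 u^2 |s|: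
   either s is representable (then w = v), or |yh| < 2^k and |xh| < 2^(k+1) make both errors
   smaller, or all operands of w lie on the grid of step 4 u^2 2^k and w is exact, or yh is so
   small that |s| is close to 2^(k+1).  Finally |xl + yl| <= 3 u |s| turns the absolute bound
   into the relative one.

   If r(xh, yh) > 1/2, Sterbenz's lemma makes xh + yh exact, so only v = RN(xl + yl) errs, by at
   most u |xl + yl|.  As |xh| and |yh| are not consecutive, xh + yh is at least two ulps of yh,
   which dominates the low-order parts: |xl + yl| <= |xh + xl + yh + yl|. *)

From Stdlib Require Import Reals Lra Lia ZArith.
Open Scope R_scope.

Lemma Rabs_le_inv a b : Rabs a <= b -> - b <= a <= b.
Proof. unfold Rabs; destruct (Rcase_abs a); intros; lra. Qed.

Ltac split_Rabs :=
  repeat match goal with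
  | H : context [Rabs ?x] |- _ =>
      let h := fresh "hh" in destruct (Rcase_abs x) as [h|h];
      [rewrite (Rabs_left x h) in * | rewrite (Rabs_right x h) in *]
  | |- context [Rabs ?x] =>
      let h := fresh "hh" in destruct (Rcase_abs x) as [h|h];
      [rewrite (Rabs_left x h) in * | rewrite (Rabs_right x h) in *]
  end.

Definition bpow (e : Z) : R := powerRZ 2 e.

Lemma bpow_pos e : 0 < bpow e.
Proof. unfold bpow; apply powerRZ_lt; lra. Qed.

Lemma bpow_plus a b : bpow (a + b) = bpow a * bpow b.
Proof. unfold bpow; apply powerRZ_add; lra. Qed.

Lemma bpow_1 : bpow 1 = 2.
Proof. unfold bpow; simpl; ring. Qed.

Lemma bpow_Rpower e : bpow e = Rpower 2 (IZR e).
Proof. unfold bpow; apply powerRZ_Rpower; lra. Qed.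

Lemma bpow_lt a b : (a < b)%Z -> bpow a < bpow b.
Proof. intros H; rewrite !bpow_Rpower; apply Rpower_lt; [lra| apply IZR_lt; exact H]. Qed.

Lemma bpow_le a b : (a <= b)%Z -> bpow a <= bpow b.
Proof. intros H. destruct (Z.eq_dec a b) as [->|]; [lra|]. left; apply bpow_lt; lia. Qed.

Lemma IZR_pow2 n : (0 <= n)%Z -> IZR (2 ^ n) = bpow n.
Proof.
  intros Hn. rewrite <- (Z2Nat.id n Hn), <- pow_IZR. unfold bpow.
  rewrite pow_powerRZ. reflexivity.
Qed.

Lemma u_bpow p : u p = bpow (- Z.of_nat p).
Proof. unfold u, bpow. rewrite powerRZ_neg', <- pow_powerRZ. reflexivity. Qed.

Lemma u_pos p : 0 < u p.
Proof. rewrite u_bpow; apply bpow_pos. Qed.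

Lemma u_le_inv_pow p k : (k <= p)%nat -> u p <= / 2 ^ k.
Proof.
  intros H. unfold u. apply Rinv_le_contravar; [apply pow_lt; lra | apply Rle_pow; [lra | auto]].
Qed.

Definition pow2 (t : R) : Prop := exists e : Z, t = bpow e.

Lemma pow2_pos t : pow2 t -> 0 < t.
Proof. intros [e ->]; apply bpow_pos. Qed.

Lemma pow2_mul a b : pow2 a -> pow2 b -> pow2 (a * b).
Proof. intros [e ->] [f ->]. exists (e + f)%Z. now rewrite bpow_plus. Qed.

Lemma pow2_two : pow2 2.
Proof. exists 1%Z. now rewrite bpow_1. Qed.

Lemma pow2_half : pow2 (/ 2).
Proof. exists (-1)%Z. unfold bpow. simpl. field. Qed.

Lemma pow2_u p : pow2 (u p).
Proof. exists (- Z.of_nat p)%Z. apply u_bpow. Qed.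

Ltac solve_pow2 :=
  repeat first [ assumption | apply pow2_mul | apply pow2_two | apply pow2_half | apply pow2_u ].

Lemma binade x : 0 < x -> exists T, pow2 T /\ T <= x < 2 * T.
Proof.
  intros Hx. exists (bpow (Zfloor (Rlog 2 x))). split; [eexists; reflexivity|].
  destruct (Zfloor_bound (Rlog 2 x)) as [H1 H2].
  replace (2 * _) with (bpow (Zfloor (Rlog 2 x) + 1)) by (rewrite bpow_plus, bpow_1; ring).
  rewrite !bpow_Rpower.
  assert (E : Rpower 2 (Rlog 2 x) = x) by (apply Rpower_Rlog; lra).
  split.
  - destruct H1 as [H1|H1].
    + left. rewrite <- E at 2. apply Rpower_lt; lra.
    + rewrite H1, E. lra.
  - rewrite <- E at 1. apply Rpower_lt; [lra|]. rewrite plus_IZR. lra.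
Qed.

Definition on_grid (t x : R) : Prop := exists N : Z, x = IZR N * t.

Lemma on_grid_add t x y : on_grid t x -> on_grid t y -> on_grid t (x + y).
Proof. intros [N ->] [M ->]. exists (N + M)%Z. rewrite plus_IZR. ring. Qed.

Lemma on_grid_opp t x : on_grid t x -> on_grid t (- x).
Proof. intros [N ->]. exists (- N)%Z. rewrite opp_IZR. ring. Qed.

Lemma on_grid_sub t x y : on_grid t x -> on_grid t y -> on_grid t (x - y).
Proof. intros. apply on_grid_add, on_grid_opp; auto. Qed.

Lemma on_grid_0 t : on_grid t 0.
Proof. exists 0%Z. ring. Qed.

Lemma on_grid_refl t : on_grid t t.
Proof. exists 1%Z. ring. Qed.

Lemma on_grid_double t x : on_grid (2 * t) x -> on_grid t x.
Proof. intros [N ->]. exists (2 * N)%Z. rewrite mult_IZR. ring. Qed.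

Lemma on_grid_bpow_le e e' x : (e' <= e)%Z -> on_grid (bpow e) x -> on_grid (bpow e') x.
Proof.
  intros H [N ->]. exists (N * 2 ^ (e - e'))%Z.
  rewrite mult_IZR, IZR_pow2, Rmult_assoc, <- bpow_plus by lia.
  do 3 f_equal. lia.
Qed.

Lemma on_grid_gap t x y : 0 < t -> on_grid t x -> on_grid t y -> x < y -> x + t <= y.
Proof.
  intros Ht [N ->] [M ->] H.
  assert (HNM : (N < M)%Z) by (apply lt_IZR, Rmult_lt_reg_r with t; auto).
  assert (HNM' : IZR N + 1 <= IZR M) by (rewrite <- plus_IZR; apply IZR_le; lia).
  nra.
Qed.

Lemma fp_opp p x : is_fp p x -> is_fp p (- x).
Proof. intros [M [e [-> H]]]. exists (- M)%Z, e. rewrite opp_IZR. split; [ring| lia]. Qed.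

Lemma fp_0 p : is_fp p 0.
Proof. exists 0%Z, 0%Z. split; [simpl; ring | simpl; apply Z.pow_pos_nonneg; lia]. Qed.

Lemma fp_mul_pow2 p x t : is_fp p x -> pow2 t -> is_fp p (x * t).
Proof.
  intros [M [e [-> H]]] [k ->]. exists M, (e + k)%Z. split; [|exact H].
  change (powerRZ 2 (e + k)) with (bpow (e + k)). rewrite bpow_plus. unfold bpow. ring.
Qed.

Section Format.
Variable p : nat.
Hypothesis Hp : (1 <= p)%nat.
Notation P := (Z.of_nat p).

Lemma fp_IZR_mul_bpow N e : (Z.abs N <= 2 ^ P)%Z -> is_fp p (IZR N * bpow e).
Proof.
  intros HN.
  destruct (Z.eq_dec (Z.abs N) (2 ^ P)) as [E|E].
  2:{ exists N, e. split; [reflexivity| lia]. }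
  assert (HP2 : (2 ^ P = 2 * 2 ^ (P - 1))%Z).
  { rewrite <- Z.pow_succ_r by lia. f_equal; lia. }
  assert (Hlt : (2 ^ (P - 1) < 2 ^ P)%Z) by (apply Z.pow_lt_mono_r; lia).
  assert (Hpos : (0 < 2 ^ (P - 1))%Z) by (apply Z.pow_pos_nonneg; lia).
  change (powerRZ 2 (e + 1)) with (bpow (e + 1)).
  destruct (Z.abs_spec N) as [[_ A]|[_ A]].
  - exists (2 ^ (P - 1))%Z, (e + 1)%Z. split; [|rewrite Z.abs_eq; lia].
    replace N with (2 * 2 ^ (P - 1))%Z by lia.
    rewrite mult_IZR, bpow_plus, bpow_1. ring.
  - exists (- 2 ^ (P - 1))%Z, (e + 1)%Z. split; [|rewrite Z.abs_opp, Z.abs_eq; lia].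
    replace N with (- (2 * 2 ^ (P - 1)))%Z by lia.
    rewrite opp_IZR, mult_IZR, opp_IZR, bpow_plus, bpow_1. ring.
Qed.

Lemma fp_pow2 t : pow2 t -> is_fp p t.
Proof.
  intros [k ->]. replace (bpow k) with (IZR 1 * bpow k) by ring. apply fp_IZR_mul_bpow.
  assert (2 ^ 0 < 2 ^ P)%Z by (apply Z.pow_lt_mono_r; lia). simpl in *. lia.
Qed.

Lemma fp_of_on_grid_bpow e x : on_grid (bpow e) x -> Rabs x <= bpow (e + P) -> is_fp p x.
Proof.
  intros [N ->] H. apply fp_IZR_mul_bpow.
  rewrite Rabs_mult, (Rabs_pos_eq (bpow e)), bpow_plus, Rabs_Zabs in H
    by (left; apply bpow_pos).
  assert (HN : IZR (Z.abs N) <= bpow P).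
  { apply Rmult_le_reg_r with (bpow e); [apply bpow_pos| lra]. }
  rewrite <- IZR_pow2 in HN by lia. now apply le_IZR.
Qed.

Lemma on_grid_bpow_of_fp e x : is_fp p x -> bpow (e + P - 1) <= Rabs x -> on_grid (bpow e) x.
Proof.
  intros [M [f [-> HM]]] H.
  change (powerRZ 2 f) with (bpow f) in *.
  rewrite Rabs_mult, (Rabs_pos_eq (bpow f)), Rabs_Zabs in H by (left; apply bpow_pos).
  destruct (Z_lt_le_dec f e) as [Hf|Hf].
  - exfalso.
    assert (HM' : IZR (Z.abs M) < bpow P) by (rewrite <- IZR_pow2 by lia; now apply IZR_lt).
    assert (IZR (Z.abs M) * bpow f < bpow P * bpow f)
      by (apply Rmult_lt_compat_r; [apply bpow_pos| exact HM']).
    assert (bpow (P + f) <= bpow (e + P - 1)) by (apply bpow_le; lia).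
    rewrite bpow_plus in *. lra.
  - exists (M * 2 ^ (f - e))%Z.
    rewrite mult_IZR, IZR_pow2, Rmult_assoc, <- bpow_plus by lia.
    do 2 f_equal. lia.
Qed.

Lemma two_u_mul_bpow j : 2 * u p * bpow j = bpow (j + 1 - P).
Proof.
  rewrite u_bpow, <- bpow_1, <- !bpow_plus. f_equal. lia.
Qed.

Lemma fp_of_on_grid T x : pow2 T -> on_grid (2 * u p * T) x -> Rabs x <= 2 * T -> is_fp p x.
Proof.
  intros [j ->] G H. rewrite two_u_mul_bpow in G. apply (fp_of_on_grid_bpow _ _ G).
  replace (j + 1 - P + P)%Z with (j + 1)%Z by lia. now rewrite bpow_plus, bpow_1, Rmult_comm.
Qed.

Lemma on_grid_of_fp T x : pow2 T -> is_fp p x -> T <= Rabs x -> on_grid (2 * u p * T) x.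
Proof.
  intros [j ->] Hx H. rewrite two_u_mul_bpow. apply on_grid_bpow_of_fp; auto.
  now replace (j + 1 - P + P - 1)%Z with j by lia.
Qed.

Lemma on_grid_pow2 T : pow2 T -> on_grid (2 * u p * T) T.
Proof.
  intros HT. apply on_grid_of_fp; [auto | apply fp_pow2; auto |].
  rewrite Rabs_pos_eq; [lra | left; apply pow2_pos; auto].
Qed.

Lemma exists_fp_near x T : pow2 T -> Rabs x <= 2 * T ->
  exists f, is_fp p f /\ Rabs (f - x) <= u p * T.
Proof.
  intros HT Hx. set (g := 2 * u p * T).
  assert (Hg : 0 < g) by (pose proof (pow2_pos T HT); pose proof (u_pos p); unfold g; nra).
  set (N := Zfloor (x / g + / 2)).
  destruct (Zfloor_bound (x / g + / 2)) as [H1 H2]. fold N in H1, H2.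
  exists (IZR N * g). split.
  - apply (fp_of_on_grid T); [auto | exists N; reflexivity |].
    assert (HgT : 2 * T = IZR (2 ^ P) * g).
    { unfold g. rewrite IZR_pow2, u_bpow by lia.
      replace (bpow P * (2 * bpow (- P) * T)) with (2 * T * (bpow P * bpow (- P))) by ring.
      rewrite <- bpow_plus, Z.add_opp_diag_r. simpl. ring. }
    assert (Hxg : - IZR (2 ^ P) <= x / g <= IZR (2 ^ P)).
    { apply Rabs_le_inv in Hx. rewrite HgT in Hx. split;
        [apply Rmult_le_reg_r with g | apply Rmult_le_reg_r with g];
        auto; unfold Rdiv; rewrite Rmult_assoc, Rinv_l; lra. }
    assert (HN : (Z.abs N <= 2 ^ P)%Z).
    { assert (IZR N < IZR (2 ^ P + 1)) by (rewrite plus_IZR; lra).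
      assert (IZR (- 2 ^ P - 1) < IZR N) by (rewrite minus_IZR, opp_IZR; lra).
      apply lt_IZR in H. apply lt_IZR in H0. lia. }
    rewrite HgT, Rabs_mult, (Rabs_pos_eq g), Rabs_Zabs by lra.
    apply Rmult_le_compat_r; [lra | now apply IZR_le].
  - replace (u p * T) with (g / 2) by (unfold g; field). apply Rabs_le.
    assert (IZR N * g <= (x / g + / 2) * g) by (apply Rmult_le_compat_r; lra).
    assert ((x / g + / 2 - 1) * g <= IZR N * g) by (apply Rmult_le_compat_r; lra).
    replace ((x / g + / 2) * g) with (x + g / 2) in * by (field; lra).
    replace ((x / g + / 2 - 1) * g) with (x - g / 2) in * by (field; lra).
    lra.
Qed.

End Format.

Section Rounding.
Variable p : nat.
Hypothesis Hp : (1 <= p)%nat.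
Notation P := (Z.of_nat p).
Variable rn : R -> R.
Hypothesis HRN : is_RN p rn.

Lemma rn_fp x : is_fp p (rn x).
Proof. apply (HRN x). Qed.

Lemma rn_nearest x f : is_fp p f -> Rabs (rn x - x) <= Rabs (f - x).
Proof. apply (HRN x). Qed.

Lemma rn_exact x : is_fp p x -> rn x = x.
Proof.
  intros Hx. pose proof (rn_nearest x x Hx) as H.
  rewrite Rminus_diag, Rabs_R0 in H. pose proof (Rabs_pos (rn x - x)).
  destruct (Req_dec (rn x - x) 0); [lra|].
  pose proof (Rabs_pos_lt _ H1). lra.
Qed.

Lemma rn_0 : rn 0 = 0.
Proof. apply rn_exact, fp_0. Qed.

Lemma rn_le x f : is_fp p f -> x <= f -> rn x <= f.
Proof.
  intros Hf H. pose proof (rn_nearest x f Hf).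
  destruct (Rle_lt_dec (rn x) f); auto. split_Rabs; lra.
Qed.

Lemma rn_ge x f : is_fp p f -> f <= x -> f <= rn x.
Proof.
  intros Hf H. pose proof (rn_nearest x f Hf).
  destruct (Rle_lt_dec f (rn x)); auto. split_Rabs; lra.
Qed.

Lemma rn_abs_le x F : is_fp p F -> Rabs x <= F -> Rabs (rn x) <= F.
Proof.
  intros HF H. apply Rabs_le_inv in H. apply Rabs_le. split.
  - apply rn_ge; [apply fp_opp; auto | lra].
  - apply rn_le; auto; lra.
Qed.

Lemma rn_abs_ge x F : is_fp p F -> F <= Rabs x -> F <= Rabs (rn x).
Proof.
  intros HF H. destruct (Rle_lt_dec 0 x).
  - assert (F <= rn x) by (apply rn_ge; auto; split_Rabs; lra). split_Rabs; lra.
  - assert (rn x <= - F) by (apply rn_le; [apply fp_opp; auto | split_Rabs; lra]).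
    split_Rabs; lra.
Qed.

Lemma rn_err_pow2 x T : pow2 T -> Rabs x <= 2 * T -> Rabs (rn x - x) <= u p * T.
Proof.
  intros HT H. destruct (exists_fp_near p Hp x T HT H) as [f [Hf Hd]].
  pose proof (rn_nearest x f Hf). lra.
Qed.

Lemma rn_rel_error x : Rabs (rn x - x) <= u p * Rabs x.
Proof.
  destruct (Req_dec x 0) as [->|Hx].
  - rewrite rn_0, Rminus_diag, Rabs_R0. lra.
  - destruct (binade (Rabs x)) as [T [HT [H1 H2]]]; [now apply Rabs_pos_lt|].
    pose proof (rn_err_pow2 x T HT (Rlt_le _ _ H2)).
    pose proof (u_pos p). nra.
Qed.

Lemma low_part_bound h l T : pow2 T -> is_fp p h -> rn (h + l) = h -> Rabs h < 2 * T ->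
  Rabs l <= u p * T.
Proof.
  intros HT Hh E Hb.
  replace (Rabs l) with (Rabs (rn (h + l) - (h + l)))
    by (rewrite E, <- Rabs_Ropp; f_equal; ring).
  apply rn_err_pow2; auto.
  destruct (Rle_lt_dec (Rabs (h + l)) (2 * T)) as [|Hx]; auto. exfalso.
  assert (F2T : is_fp p (2 * T)) by (apply fp_pow2; solve_pow2).
  destruct (Rle_lt_dec 0 (h + l)).
  - pose proof (rn_nearest (h + l) _ F2T). rewrite E in H. split_Rabs; lra.
  - pose proof (rn_nearest (h + l) _ (fp_opp p _ F2T)). rewrite E in H. split_Rabs; lra.
Qed.

Lemma low_part_ge_neg_half_gap h l c : rn (h + l) = h -> is_fp p (h - c) -> 0 < c -> - (c / 2) <= l.
Proof.
  intros E Hf Hc. pose proof (rn_nearest (h + l) _ Hf) as H. rewrite E in H.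
  replace (h - (h + l)) with (- l) in H by ring.
  replace (h - c - (h + l)) with (- c - l) in H by ring.
  destruct (Rle_lt_dec (- (c / 2)) l); auto. split_Rabs; lra.
Qed.

Lemma sterbenz a b : is_fp p a -> is_fp p b -> Rabs (a - b) <= Rabs a -> Rabs (a - b) <= Rabs b ->
  is_fp p (a - b).
Proof.
  intros Ha Hb H1 H2.
  destruct (Req_dec (a - b) 0) as [E|E]; [rewrite E; apply fp_0|].
  destruct (binade (Rabs (a - b))) as [T [HT [J1 J2]]]; [now apply Rabs_pos_lt|].
  apply (fp_of_on_grid p Hp T); [auto | | lra].
  apply on_grid_sub; apply (on_grid_of_fp p Hp); auto; lra.
Qed.

(* Both operands lie on the grid of [a]; if [a + b] is not representable, the rounding
   error is at most [|a|] and fits in [p] digits on that grid. *)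
Lemma plus_error_fp_aux a b ea eb Ma Mb : a = IZR Ma * bpow ea -> b = IZR Mb * bpow eb ->
  (Z.abs Ma < 2 ^ P)%Z -> (Z.abs Mb < 2 ^ P)%Z -> (ea <= eb)%Z ->
  is_fp p (a + b - rn (a + b)).
Proof.
  intros Ea Eb Ha Hb He.
  assert (Ga : on_grid (bpow ea) a) by (exists Ma; auto).
  assert (Gb : on_grid (bpow ea) b) by (apply on_grid_bpow_le with eb; auto; exists Mb; auto).
  assert (Fb : is_fp p b) by (exists Mb, eb; auto).
  assert (Gs : on_grid (bpow ea) (a + b)) by (apply on_grid_add; auto).
  destruct (Rle_lt_dec (Rabs (a + b)) (bpow (ea + P))) as [H|H].
  { rewrite rn_exact by (apply (fp_of_on_grid_bpow p Hp ea); auto).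
    rewrite Rminus_diag. apply fp_0. }
  assert (Ha' : Rabs a <= bpow (ea + P)).
  { rewrite Ea, Rabs_mult, Rabs_Zabs, (Rabs_pos_eq (bpow ea)), bpow_plus, Rmult_comm
      by (left; apply bpow_pos).
    apply Rmult_le_compat_l; [left; apply bpow_pos|].
    rewrite <- IZR_pow2 by lia. apply IZR_le. lia. }
  assert (Gr : on_grid (bpow ea) (rn (a + b))).
  { apply on_grid_bpow_le with (ea + 1)%Z; [lia|]. apply (on_grid_bpow_of_fp p Hp); [apply rn_fp|].
    replace (ea + 1 + P - 1)%Z with (ea + P)%Z by lia.
    apply rn_abs_ge; [apply (fp_pow2 p Hp); eexists; reflexivity | lra]. }
  apply (fp_of_on_grid_bpow p Hp ea); [now apply on_grid_sub|].
  pose proof (rn_nearest (a + b) b Fb).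
  replace (b - (a + b)) with (- a) in H0 by ring.
  rewrite Rabs_Ropp in H0.
  rewrite <- Rabs_Ropp. replace (- (a + b - rn (a + b))) with (rn (a + b) - (a + b)) by ring.
  lra.
Qed.

Lemma plus_error_fp a b : is_fp p a -> is_fp p b -> is_fp p (a + b - rn (a + b)).
Proof.
  intros [Ma [ea [Ea Ha]]] [Mb [eb [Eb Hb]]].
  destruct (Z_le_gt_dec ea eb).
  - eapply plus_error_fp_aux; eauto.
  - rewrite (Rplus_comm a b). eapply plus_error_fp_aux; eauto. lia.
Qed.

Lemma fp_half x : is_fp p x -> is_fp p (x / 2).
Proof. intros H. apply fp_mul_pow2; [auto | apply pow2_half]. Qed.

Lemma fp_double x : is_fp p x -> is_fp p (2 * x).
Proof. intros H. rewrite Rmult_comm. apply fp_mul_pow2; [auto | apply pow2_two]. Qed.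

Lemma rn_plus_sub_fp a b : is_fp p a -> is_fp p b -> Rabs b <= Rabs a -> is_fp p (rn (a + b) - a).
Proof.
  intros Ha Hb H. pose proof (rn_fp (a + b)) as Hs.
  assert (Hexact : Rabs (a + b) <= Rabs b -> rn (a + b) - a = b).
  { intros Hab. rewrite rn_exact; [ring|].
    replace (a + b) with (a - - b) by ring.
    apply sterbenz; [auto | apply fp_opp; auto | split_Rabs; lra | split_Rabs; lra]. }
  destruct (Rle_lt_dec (Rabs (a + b)) (Rabs b)) as [Hab|Hab]; [rewrite Hexact; auto|].
  destruct (Rle_lt_dec 0 a); destruct (Rle_lt_dec 0 b).
  - assert (a <= rn (a + b)) by (apply rn_ge; auto; lra).
    assert (rn (a + b) <= 2 * a) by (apply rn_le; [apply fp_double; auto | split_Rabs; lra]).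
    apply sterbenz; auto; split_Rabs; lra.
  - assert (a / 2 <= rn (a + b)) by (apply rn_ge; [apply fp_half; auto | split_Rabs; lra]).
    assert (rn (a + b) <= a) by (apply rn_le; auto; lra).
    apply sterbenz; auto; split_Rabs; lra.
  - assert (rn (a + b) <= a / 2) by (apply rn_le; [apply fp_half; auto | split_Rabs; lra]).
    assert (a <= rn (a + b)) by (apply rn_ge; auto; lra).
    apply sterbenz; auto; split_Rabs; lra.
  - assert (rn (a + b) <= a) by (apply rn_le; auto; lra).
    assert (2 * a <= rn (a + b)) by (apply rn_ge; [apply fp_double; auto | split_Rabs; lra]).
    apply sterbenz; auto; split_Rabs; lra.
Qed.

Lemma fast2sum_exact a b : is_fp p a -> is_fp p b -> Rabs b <= Rabs a ->
  fst (Fast2Sum rn a b) + snd (Fast2Sum rn a b) = a + b.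
Proof.
  intros Ha Hb H. unfold Fast2Sum. cbv [fst snd].
  rewrite (rn_exact (rn (a + b) - a)) by (apply rn_plus_sub_fp; auto).
  replace (b - (rn (a + b) - a)) with (a + b - rn (a + b)) by ring.
  rewrite (rn_exact (a + b - rn (a + b))) by (apply plus_error_fp; auto). ring.
Qed.

Lemma twosum_exact_sum a b : is_fp p a -> is_fp p b -> is_fp p (a + b) ->
  TwoSum rn a b = (a + b, 0).
Proof.
  intros Ha Hb Hs. unfold TwoSum. cbv zeta.
  rewrite (rn_exact (a + b)) by auto.
  replace (a + b - b) with a by ring. rewrite (rn_exact a) by auto.
  replace (a + b - a) with b by ring. rewrite (rn_exact b) by auto.
  now rewrite !Rminus_diag, rn_0, Rplus_0_l, rn_0.
Qed.

Lemma twosum_exact a b : is_fp p a -> is_fp p b -> 0 < a -> b < 0 ->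
  (2 * - b <= a \/ 2 * a <= - b) ->
  fst (TwoSum rn a b) + snd (TwoSum rn a b) = a + b.
Proof.
  intros Ha Hb Hapos Hbneg Hcase. unfold TwoSum. cbv [fst snd].
  pose proof (rn_fp (a + b)) as Hs. set (s := rn (a + b)) in *.
  pose proof (rn_fp (s - b)) as Ha'. set (a' := rn (s - b)) in *.
  assert (Herr : rn (a + b - s) = a + b - s) by (apply rn_exact, plus_error_fp; auto).
  destruct Hcase as [HA|HB].
  - assert (a / 2 <= s) by (apply rn_ge; [apply fp_half; auto | lra]).
    assert (s <= a) by (apply rn_le; auto; lra).
    assert (s <= a') by (apply rn_ge; auto; lra).
    assert (a' <= 2 * s) by (apply rn_le; [apply fp_double; auto | lra]).
    rewrite (rn_exact (s - a')) by (apply sterbenz; auto; split_Rabs; lra).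
    rewrite (rn_exact (a - a')) by (apply sterbenz; auto; split_Rabs; lra).
    rewrite (rn_exact (b - (s - a'))).
    + replace (a - a' + (b - (s - a'))) with (a + b - s) by ring. rewrite Herr. ring.
    + replace (b - (s - a')) with (- ((s + - b) - rn (s + - b))) by (unfold a', Rminus; ring).
      apply fp_opp, plus_error_fp, fp_opp; auto.
  - assert (s <= b / 2) by (apply rn_le; [apply fp_half; auto | lra]).
    assert (b <= s) by (apply rn_ge; auto; lra).
    assert (Ea : a' = s - b) by (apply rn_exact, sterbenz; auto; split_Rabs; lra).
    rewrite Ea. replace (s - (s - b)) with b by ring.
    rewrite (rn_exact b), Rminus_diag, rn_0 by auto.
    replace (a - (s - b)) with (a + b - s) by ring. rewrite Herr, Rplus_0_r, Herr. ring.
Qed.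

End Rounding.

Definition rn_opp (rn : R -> R) (x : R) : R := - rn (- x).

Lemma is_RN_rn_opp p rn : is_RN p rn -> is_RN p (rn_opp rn).
Proof.
  intros H x. unfold rn_opp. split.
  - apply fp_opp, (H (- x)).
  - intros f Hf. pose proof (proj2 (H (- x)) (- f) (fp_opp p f Hf)) as Hopt.
    replace (- rn (- x) - x) with (- (rn (- x) - - x)) by ring.
    replace (f - x) with (- (- f - - x)) by ring. now rewrite !Rabs_Ropp.
Qed.

Ltac push_opp := unfold rn_opp, Rminus; repeat rewrite ?Ropp_plus_distr, ?Ropp_involutive.

Lemma TwoSum_rn_opp rn a b :
  TwoSum (rn_opp rn) (- a) (- b) = (- fst (TwoSum rn a b), - snd (TwoSum rn a b)).
Proof. unfold TwoSum; cbv zeta; cbn [fst snd]; push_opp; reflexivity. Qed.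

Lemma Fast2Sum_rn_opp rn a b :
  Fast2Sum (rn_opp rn) (- a) (- b) = (- fst (Fast2Sum rn a b), - snd (Fast2Sum rn a b)).
Proof. unfold Fast2Sum; cbv zeta; cbn [fst snd]; push_opp; reflexivity. Qed.

Lemma SloppyAdd_rn_opp rn xh xl yh yl :
  SloppyAdd (rn_opp rn) (- xh) (- xl) (- yh) (- yl) =
  (- fst (SloppyAdd rn xh xl yh yl), - snd (SloppyAdd rn xh xl yh yl)).
Proof.
  unfold SloppyAdd. rewrite TwoSum_rn_opp.
  destruct (TwoSum rn xh yh) as [sh sl]. cbn [fst snd].
  rewrite <- Fast2Sum_rn_opp. push_opp. reflexivity.
Qed.

Lemma sloppy_relerr_rn_opp rn xh xl yh yl :
  sloppy_relerr (rn_opp rn) (- xh) (- xl) (- yh) (- yl) = sloppy_relerr rn xh xl yh yl.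
Proof.
  unfold sloppy_relerr. rewrite SloppyAdd_rn_opp.
  destruct (SloppyAdd rn xh xl yh yl) as [z1 z2]. cbn [fst snd].
  replace (- z1 + - z2 - (- xh + - xl + - yh + - yl))
    with (- (z1 + z2 - (xh + xl + yh + yl))) by ring.
  replace (- xh + - xl + - yh + - yl) with (- (xh + xl + yh + yl)) by ring.
  now rewrite !Rabs_Ropp.
Qed.

Lemma rn_opp_double_word rn h l : rn (h + l) = h -> rn_opp rn (- h + - l) = - h.
Proof. intros E. push_opp. now rewrite E. Qed.

Lemma rr_opp x y : rr (- x) (- y) = rr x y.
Proof. unfold rr. rewrite !Rabs_Ropp. now replace (- x * - y) with (x * y) by ring. Qed.

Lemma rel_error_perturbed e s l v : 0 <= v <= / 16 ->
  Rabs e <= 3 * v ^ 2 * Rabs s -> Rabs l <= 3 * v * Rabs s ->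
  Rabs e / Rabs (s + l) <= 3 * v ^ 2 + 24 * v ^ 3.
Proof.
  intros Hv He Hl.
  assert (Hsl : (1 - 3 * v) * Rabs s <= Rabs (s + l)).
  { pose proof (Rabs_triang (s + l) (- l)). rewrite Rabs_Ropp in H.
    replace (s + l + - l) with s in H by ring. lra. }
  assert (Hk : 3 * v ^ 2 <= (3 * v ^ 2 + 24 * v ^ 3) * (1 - 3 * v)) by nra.
  destruct (Req_dec (Rabs (s + l)) 0) as [E|E].
  { rewrite E. unfold Rdiv. rewrite Rinv_0, Rmult_0_r. nra. }
  apply Rmult_le_reg_r with (Rabs (s + l)); [pose proof (Rabs_pos (s + l)); lra|].
  unfold Rdiv. rewrite Rmult_assoc, Rinv_l, Rmult_1_r by auto.
  pose proof (Rabs_pos s). nra.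
Qed.

Lemma SloppyAdd_twosum_exact rn xh xl yh yl :
  fst (TwoSum rn xh yh) + snd (TwoSum rn xh yh) = xh + yh ->
  SloppyAdd rn xh xl yh yl =
  Fast2Sum rn (rn (xh + yh)) (rn (xh + yh - rn (xh + yh) + rn (xl + yl))).
Proof.
  unfold SloppyAdd. destruct (TwoSum rn xh yh) as [sh sl] eqn:E. cbn [fst snd]. intros H.
  assert (Esh : sh = rn (xh + yh)) by (unfold TwoSum in E; now injection E).
  subst sh. now replace sl with (xh + yh - rn (xh + yh)) by lra.
Qed.

Section MildCancellation.
Variable p : nat.
Hypothesis Hp : (4 <= p)%nat.
Variable rn : R -> R.
Hypothesis HRN : is_RN p rn.
Variables a b la lb T : R.
Hypotheses (Fa : is_fp p a) (Fb : is_fp p b).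
Hypotheses (Ea : rn (a + la) = a) (Eb : rn (b + lb) = b).
Hypothesis Habs : Rabs a = Rabs (a + b) + Rabs b.
Hypothesis Hb_s : Rabs b <= Rabs (a + b).
Hypothesis HT : pow2 T.
Hypothesis HTs : T <= Rabs (a + b) < 2 * T.

Let Hp1 : (1 <= p)%nat. Proof. lia. Qed.
Let sh := rn (a + b).
Let sl := a + b - sh.
Let v := rn (la + lb).
Let w := rn (sl + v).
Let err_sum := Rabs (w - (sl + v)) + Rabs (v - (la + lb)).

Let u_bounds : 0 < u p <= / 16.
Proof. pose proof (u_le_inv_pow p 4 Hp). split; [apply u_pos | lra]. Qed.

Let T_pos : 0 < T.
Proof. now apply pow2_pos. Qed.

Let uT_pos : 0 < u p * T.
Proof. apply Rmult_lt_0_compat; [apply u_pos | exact T_pos]. Qed.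

Let rn_err x t : pow2 t -> Rabs x <= 2 * t -> Rabs (rn x - x) <= u p * t.
Proof. apply (rn_err_pow2 p Hp1 rn HRN). Qed.

Let low_bound h l t : pow2 t -> is_fp p h -> rn (h + l) = h -> Rabs h < 2 * t -> Rabs l <= u p * t.
Proof. apply (low_part_bound p Hp1 rn HRN). Qed.

Let sl_bound : Rabs sl <= u p * T.
Proof.
  unfold sl, sh. rewrite <- Rabs_Ropp.
  replace (- (a + b - rn (a + b))) with (rn (a + b) - (a + b)) by ring.
  apply rn_err; [auto | lra].
Qed.

Let la_bound : Rabs la <= u p * (2 * T).
Proof. apply (low_bound a); [solve_pow2 | auto | auto | lra]. Qed.

Let lb_bound : Rabs lb <= u p * T.
Proof. apply (low_bound b); [auto | auto | auto | lra]. Qed.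

Let la_lb_bound : Rabs (la + lb) <= 3 * u p * T.
Proof. pose proof (Rabs_triang la lb). pose proof la_bound. pose proof lb_bound. lra. Qed.

Let v_bound : Rabs v <= 4 * u p * T.
Proof.
  assert (H4 : pow2 (4 * u p * T)) by (replace 4 with (2 * 2) by ring; solve_pow2).
  apply (rn_abs_le p rn HRN); [exact (fp_pow2 p Hp1 _ H4) |].
  pose proof la_lb_bound. pose proof u_bounds. nra.
Qed.

Let w_bound : Rabs w <= T.
Proof.
  apply (rn_abs_le p rn HRN); [apply (fp_pow2 p Hp1); auto |].
  pose proof (Rabs_triang sl v). pose proof sl_bound. pose proof v_bound. pose proof u_bounds. nra.
Qed.

Let le_3u2 c e : c * T <= 3 * Rabs (a + b) -> e <= c * (u p ^ 2 * T) ->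
  e <= 3 * u p ^ 2 * Rabs (a + b).
Proof.
  intros H1 H2. assert (u p ^ 2 * (c * T) <= u p ^ 2 * (3 * Rabs (a + b)))
    by (apply Rmult_le_compat_l; [apply pow2_ge_0 | auto]).
  lra.
Qed.

Let err_sum_exact_sum : sl = 0 -> err_sum <= 3 * u p ^ 2 * Rabs (a + b).
Proof.
  intros Hsl. apply (le_3u2 2); [lra|]. unfold err_sum.
  assert (Ew : w = v).
  { unfold w. rewrite Hsl, Rplus_0_l. apply (rn_exact p rn HRN). unfold v. apply (rn_fp p rn HRN). }
  rewrite Ew, Hsl, Rplus_0_l, Rminus_diag, Rabs_R0.
  assert (Rabs (v - (la + lb)) <= u p * (2 * u p * T)).
  { apply rn_err; [solve_pow2|]. pose proof la_lb_bound. lra. }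
  lra.
Qed.

Let small_b_of_inexact_sum : sl <> 0 -> Rabs b < T.
Proof.
  intros Hsl. destruct (Rlt_le_dec (Rabs b) T) as [|HbT]; auto. exfalso. apply Hsl.
  assert (Fs : is_fp p (a + b)).
  { apply (fp_of_on_grid p Hp1 T); [auto | | lra].
    apply on_grid_add; apply (on_grid_of_fp p Hp1); auto; lra. }
  unfold sl, sh. rewrite (rn_exact p rn HRN _ Fs). ring.
Qed.

Let err_sum_small_a : Rabs b < T -> Rabs a < 2 * T -> err_sum <= 3 * u p ^ 2 * Rabs (a + b).
Proof.
  intros HbT HaT. pose proof u_bounds. apply (le_3u2 3); [lra|]. unfold err_sum.
  assert (Rabs la <= u p * T) by (apply (low_bound a); auto).
  assert (Rabs lb <= u p * (/ 2 * T)) by (apply (low_bound b); [solve_pow2 | auto | auto | lra]).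
  pose proof (Rabs_triang la lb).
  assert (Rabs (v - (la + lb)) <= u p * (u p * T)) by (apply rn_err; [solve_pow2 | nra]).
  assert (Rabs v <= 2 * u p * T).
  { apply (rn_abs_le p rn HRN); [apply (fp_pow2 p Hp1); solve_pow2 | nra]. }
  assert (Rabs (w - (sl + v)) <= u p * (2 * u p * T)).
  { apply rn_err; [solve_pow2|]. pose proof (Rabs_triang sl v). pose proof sl_bound. lra. }
  lra.
Qed.

Let err_sum_large_a_mid_b : 2 * T <= Rabs a -> 2 * u p * T <= Rabs b -> Rabs b < T ->
  err_sum <= 3 * u p ^ 2 * Rabs (a + b).
Proof.
  intros HaT Hb1 Hb2. pose proof u_bounds.
  set (t := 2 * u p * T). assert (Ht : pow2 t) by (unfold t; solve_pow2).
  assert (Gb : on_grid (2 * u p * t) b) by (apply (on_grid_of_fp p Hp1); auto).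
  assert (Ga : on_grid (2 * u p * t) a) by (apply (on_grid_of_fp p Hp1); auto; unfold t; nra).
  assert (Gsh : on_grid (2 * u p * t) sh).
  { apply (on_grid_of_fp p Hp1); [auto | apply (rn_fp p rn HRN) |].
    assert (T <= Rabs sh) by (apply (rn_abs_ge p rn HRN); [apply (fp_pow2 p Hp1); auto | lra]).
    unfold t; nra. }
  assert (Gsl : on_grid (2 * u p * t) sl) by (apply on_grid_sub; [apply on_grid_add|]; auto).
  assert (Rabs lb <= u p * (/ 2 * T)) by (apply (low_bound b); [solve_pow2 | auto | auto | lra]).
  pose proof la_bound. pose proof sl_bound.
  pose proof (Rabs_triang la lb). pose proof (Rabs_triang sl v).
  unfold err_sum. destruct (Rle_lt_dec (Rabs (la + lb)) t) as [Hs|Hs].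
  - apply (le_3u2 3); [lra|].
    assert (Rabs (v - (la + lb)) <= u p * (u p * T))
      by (apply rn_err; [solve_pow2 | unfold t in *; lra]).
    assert (Rabs v <= t) by (apply (rn_abs_le p rn HRN); [apply (fp_pow2 p Hp1) |]; auto).
    assert (Rabs (w - (sl + v)) <= u p * t) by (apply rn_err; [auto | unfold t in *; lra]).
    unfold t in *; lra.
  - apply (le_3u2 2); [lra|].
    assert (Rabs (v - (la + lb)) <= u p * t) by (apply rn_err; [auto | unfold t in *; lra]).
    assert (Hv : t <= Rabs v) by (apply (rn_abs_ge p rn HRN); [apply (fp_pow2 p Hp1) | lra]; auto).
    assert (Gv : on_grid (2 * u p * t) v)
      by (apply (on_grid_of_fp p Hp1); [| apply (rn_fp p rn HRN) |]; auto).
    assert (Ew : w = sl + v).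
    { apply (rn_exact p rn HRN), (fp_of_on_grid p Hp1 t); [auto | apply on_grid_add; auto |].
      pose proof (Rabs_triang_inv v (la + lb)). unfold t in *; nra. }
    rewrite Ew, Rminus_diag, Rabs_R0. unfold t in *; lra.
Qed.

Let err_sum_large_a_tiny_b : 2 * T <= Rabs a -> Rabs b < 2 * u p * T ->
  err_sum <= 3 * u p ^ 2 * Rabs (a + b).
Proof.
  intros HaT Hb. pose proof u_bounds.
  assert (Rabs lb <= u p * (u p * T)) by (apply (low_bound b); [solve_pow2 | auto | auto | lra]).
  pose proof la_bound. pose proof sl_bound.
  pose proof (Rabs_triang la lb). pose proof (Rabs_triang sl v).
  assert (Rabs (v - (la + lb)) <= u p * (2 * u p * T)) by (apply rn_err; [solve_pow2 | nra]).
  pose proof (Rabs_triang_inv v (la + lb)).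
  assert (Rabs (w - (sl + v)) <= u p * (2 * u p * T)) by (apply rn_err; [solve_pow2 | nra]).
  apply (le_3u2 4); [nra | unfold err_sum; lra].
Qed.

Let err_sum_bound : err_sum <= 3 * u p ^ 2 * Rabs (a + b).
Proof.
  destruct (Req_dec sl 0) as [Hsl|Hsl]; [now apply err_sum_exact_sum|].
  pose proof (small_b_of_inexact_sum Hsl) as HbT.
  destruct (Rlt_le_dec (Rabs a) (2 * T)) as [HaT|HaT]; [now apply err_sum_small_a|].
  destruct (Rle_lt_dec (2 * u p * T) (Rabs b)).
  - now apply err_sum_large_a_mid_b.
  - now apply err_sum_large_a_tiny_b.
Qed.

Lemma mild_cancellation_relerr :
  let z := Fast2Sum rn (rn (a + b)) (rn (a + b - rn (a + b) + rn (la + lb))) in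
  Rabs (fst z + snd z - (a + la + b + lb)) / Rabs (a + la + b + lb) <= 3 * u p ^ 2 + 24 * u p ^ 3.
Proof.
  cbv zeta. change (rn (a + b - rn (a + b) + rn (la + lb))) with w. fold sh.
  assert (Hsh : T <= Rabs sh) by (apply (rn_abs_ge p rn HRN); [apply (fp_pow2 p Hp1); auto | lra]).
  pose proof w_bound.
  rewrite (fast2sum_exact p Hp1 rn HRN) by (first [lra | unfold w, sh; apply (rn_fp p rn HRN)]).
  replace (sh + w - (a + la + b + lb)) with ((w - (sl + v)) + (v - (la + lb))) by (unfold sl; ring).
  replace (a + la + b + lb) with ((a + b) + (la + lb)) by ring.
  pose proof u_bounds. pose proof la_lb_bound.
  apply rel_error_perturbed; [lra | | nra].
  pose proof (Rabs_triang (w - (sl + v)) (v - (la + lb))). pose proof err_sum_bound.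
  unfold err_sum in *. lra.
Qed.

End MildCancellation.

Section CloseOperands.
Variable p : nat.
Hypothesis Hp : (1 <= p)%nat.
Variable rn : R -> R.
Hypothesis HRN : is_RN p rn.
Variables a b la lb T : R.
Hypotheses (Fa : is_fp p a) (Fb : is_fp p b).
Hypotheses (Ea : rn (a + la) = a) (Eb : rn (b + lb) = b).
Hypothesis HT : pow2 T.
Hypothesis HTb : T <= - b < 2 * T.
Hypothesis Hab : - b < a <= 2 * - b.
Hypothesis Hnc : ~ consecutive_fp p a (- b).

Let ulp := 2 * u p * T.

Let ulp_pos : 0 < ulp.
Proof. pose proof (u_pos p). pose proof (pow2_pos T HT). unfold ulp. nra. Qed.

Let a_grid : on_grid ulp a.
Proof. apply (on_grid_of_fp p Hp); auto. split_Rabs; lra. Qed.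

Let b_grid : on_grid ulp b.
Proof. apply (on_grid_of_fp p Hp); auto. split_Rabs; lra. Qed.

Let sum_fp : is_fp p (a + b).
Proof. apply (fp_of_on_grid p Hp T); [auto | apply on_grid_add; auto | split_Rabs; lra]. Qed.

Let sum_ge_two_ulp : 2 * ulp <= a + b.
Proof.
  assert (Gs : on_grid ulp (a + b)) by (apply on_grid_add; auto).
  assert (Hg : ulp <= a + b)
    by (pose proof (on_grid_gap ulp 0 (a + b) ulp_pos (on_grid_0 ulp) Gs); lra).
  destruct (Req_dec (a + b) ulp) as [Eg|Eg].
  - exfalso. apply Hnc. repeat split; [auto | apply fp_opp; auto | lra |].
    intros f Hf [F1 F2]. rewrite Rmin_right in F1 by lra. rewrite Rmax_left in F2 by lra.
    assert (Gf : on_grid ulp f) by (apply (on_grid_of_fp p Hp); auto; split_Rabs; lra).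
    pose proof (on_grid_gap ulp (- b) f ulp_pos (on_grid_opp ulp b b_grid) Gf F1). lra.
  - pose proof (on_grid_gap ulp ulp (a + b) ulp_pos (on_grid_refl ulp) Gs). lra.
Qed.

Let lb_bound : Rabs lb <= ulp / 2.
Proof.
  replace (ulp / 2) with (u p * T) by (unfold ulp; field).
  apply (low_part_bound p Hp rn HRN b lb); auto. split_Rabs; lra.
Qed.

Let la_bound : Rabs la <= ulp.
Proof.
  replace ulp with (u p * (2 * T)) by (unfold ulp; ring).
  apply (low_part_bound p Hp rn HRN a la); [solve_pow2 | auto | auto | split_Rabs; lra].
Qed.

(* Either [a < 2T], so that [a] has the same ulp as [b]; or [a = 2T], whose predecessor is
   [a - ulp]; or [a > 2T] lies on the grid of step [2 ulp], which pushes [a + b] up to [3 ulp]. *)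
Let la_lower : - (ulp / 2) <= la \/ 3 * ulp <= a + b.
Proof.
  destruct (Rlt_le_dec a (2 * T)) as [Ha|Ha].
  - left.
    assert (Hla : Rabs la <= u p * T)
      by (apply (low_part_bound p Hp rn HRN a la); auto; split_Rabs; lra).
    apply Rabs_le_inv in Hla. unfold ulp. lra.
  - destruct Ha as [Ha|Ha].
    + right.
      assert (G2 : on_grid (2 * ulp) a).
      { replace (2 * ulp) with (2 * u p * (2 * T)) by (unfold ulp; ring).
        apply (on_grid_of_fp p Hp); [solve_pow2 | auto | split_Rabs; lra]. }
      assert (G2T : on_grid (2 * ulp) (2 * T)).
      { replace (2 * ulp) with (2 * u p * (2 * T)) by (unfold ulp; ring).
        apply (on_grid_pow2 p Hp). solve_pow2. }
      pose proof (on_grid_gap (2 * ulp) _ _ ltac:(lra) G2T G2 Ha).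
      pose proof (on_grid_gap ulp _ _ ulp_pos (on_grid_opp ulp b b_grid)
        (on_grid_double ulp _ G2T) ltac:(lra)).
      lra.
    + left. apply (low_part_ge_neg_half_gap p rn HRN a la ulp); auto.
      apply (fp_of_on_grid p Hp T); [auto | |].
      * rewrite <- Ha. apply on_grid_sub; [apply on_grid_double | apply on_grid_refl].
        replace (2 * (2 * u p * T)) with (2 * u p * (2 * T)) by ring.
        apply (on_grid_pow2 p Hp). solve_pow2.
      * pose proof (u_le_inv_pow p 1 Hp). pose proof (u_pos p). pose proof (pow2_pos T HT).
        rewrite <- Ha. unfold ulp. split_Rabs; nra.
Qed.

Lemma close_operands_error :
  let z := Fast2Sum rn (a + b) (rn (la + lb)) in
  Rabs (fst z + snd z - (a + b + la + lb)) <= u p * Rabs (a + b + la + lb).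
Proof.
  cbv zeta.
  pose proof sum_ge_two_ulp. pose proof la_lower.
  pose proof la_bound as Hla. pose proof lb_bound as Hlb.
  assert (Hv : Rabs (rn (la + lb)) <= 2 * ulp).
  { apply (rn_abs_le p rn HRN); [apply (fp_pow2 p Hp); unfold ulp; solve_pow2 |].
    pose proof (Rabs_triang la lb). lra. }
  rewrite (fast2sum_exact p Hp rn HRN) by
    (first [apply sum_fp | apply (rn_fp p rn HRN) | rewrite (Rabs_pos_eq (a + b)); lra]).
  replace (a + b + rn (la + lb) - (a + b + la + lb)) with (rn (la + lb) - (la + lb)) by ring.
  eapply Rle_trans;
    [apply (rn_rel_error p Hp rn HRN) | apply Rmult_le_compat_l; [left; apply u_pos |]].
  apply Rabs_le_inv in Hla, Hlb.
  rewrite (Rabs_pos_eq (a + b + la + lb)) by lra. apply Rabs_le. lra.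
Qed.

End CloseOperands.

Lemma close_operands_error_pos p rn a b la lb : (1 <= p)%nat -> is_RN p rn ->
  is_fp p a -> is_fp p b -> rn (a + la) = a -> rn (b + lb) = b ->
  b < 0 -> - b < a <= 2 * - b -> ~ consecutive_fp p a (- b) ->
  let z := Fast2Sum rn (a + b) (rn (la + lb)) in
  Rabs (fst z + snd z - (a + b + la + lb)) <= u p * Rabs (a + b + la + lb).
Proof.
  intros Hp HRN Fa Fb Ea Eb Hb Hab Hnc.
  destruct (binade (- b)) as [T [HT HTb]]; [lra|].
  now apply (close_operands_error p Hp rn HRN a b la lb T).
Qed.

Lemma consecutive_fp_sym p a b : consecutive_fp p a b -> consecutive_fp p b a.
Proof.
  intros [Ha [Hb [Hab H]]]. repeat split; auto.
  intros f Hf. rewrite Rmin_comm, Rmax_comm. now apply H.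
Qed.

Lemma Rdiv_abs_le e s k : 0 <= k -> Rabs e <= k * Rabs s -> Rabs e / Rabs s <= k.
Proof.
  intros Hk H. destruct (Req_dec (Rabs s) 0) as [E|E].
  - rewrite E. unfold Rdiv. now rewrite Rinv_0, Rmult_0_r.
  - pose proof (Rabs_pos s). apply Rmult_le_reg_r with (Rabs s); [lra|].
    unfold Rdiv. rewrite Rmult_assoc, Rinv_l by auto. lra.
Qed.

Lemma div_le_half_iff a b : 0 < b -> (a / b <= 1 / 2 <-> 2 * a <= b).
Proof.
  intros Hb. replace a with (a / b * b) at 2 by (field; lra).
  split; intros H; nra.
Qed.

Lemma rr_le_half_iff x y : 0 < x -> y < 0 -> (rr x y <= 1 / 2 <-> 2 * - y <= x \/ 2 * x <= - y).
Proof.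
  intros Hx Hy. unfold rr. destruct (Rlt_dec (x * y) 0) as [_|Hn]; [|nra].
  rewrite (Rabs_pos_eq x), (Rabs_left y) by lra.
  destruct (Rle_lt_dec (- y) x).
  - rewrite Rmin_right, Rmax_left, div_le_half_iff by lra. lra.
  - rewrite Rmin_left, Rmax_right, div_le_half_iff by lra. lra.
Qed.

Lemma SloppyAdd_exact_sum p rn xh xl yh yl : is_RN p rn ->
  is_fp p xh -> is_fp p yh -> is_fp p (xh + yh) ->
  SloppyAdd rn xh xl yh yl = Fast2Sum rn (xh + yh) (rn (xl + yl)).
Proof.
  intros HRN Fxh Fyh Fs. unfold SloppyAdd. rewrite (twosum_exact_sum p rn HRN) by auto.
  now rewrite Rplus_0_l, (rn_exact p rn HRN _ (rn_fp p rn HRN _)).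
Qed.

Lemma sloppy_relerr_mild_pos p rn xh xl yh yl : (4 <= p)%nat -> is_RN p rn ->
  is_fp p xh -> is_fp p yh -> rn (xh + xl) = xh -> rn (yh + yl) = yh ->
  0 < xh -> yh < 0 -> rr xh yh <= 1 / 2 ->
  sloppy_relerr rn xh xl yh yl <= 3 * u p ^ 2 + 24 * u p ^ 3.
Proof.
  intros Hp HRN Fxh Fyh Ex Ey Hx Hy Hr. apply rr_le_half_iff in Hr; auto.
  unfold sloppy_relerr.
  rewrite SloppyAdd_twosum_exact by (apply (twosum_exact p ltac:(lia) rn HRN); auto).
  destruct (binade (Rabs (xh + yh))) as [T [HT HTs]]; [apply Rabs_pos_lt; lra|].
  destruct Hr as [Hr|Hr].
  - apply (mild_cancellation_relerr p Hp rn HRN xh yh xl yl T); auto; split_Rabs; lra.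
  - pose proof (mild_cancellation_relerr p Hp rn HRN yh xh yl xl T) as H. cbv zeta in H.
    replace (yh + yl + xh + xl) with (xh + xl + yh + yl) in H by ring.
    rewrite (Rplus_comm yh xh), (Rplus_comm yl xl) in H.
    apply H; auto; split_Rabs; lra.
Qed.

Lemma sloppy_relerr_close_pos p rn xh xl yh yl : (1 <= p)%nat -> is_RN p rn ->
  is_fp p xh -> is_fp p yh -> rn (xh + xl) = xh -> rn (yh + yl) = yh ->
  0 < xh -> yh < 0 -> rr xh yh > 1 / 2 -> ~ consecutive_fp p xh (- yh) ->
  sloppy_relerr rn xh xl yh yl <= u p.
Proof.
  intros Hp HRN Fxh Fyh Ex Ey Hx Hy Hr Hnc.
  assert (Hr' : ~ (2 * - yh <= xh \/ 2 * xh <= - yh)) by (rewrite <- rr_le_half_iff; auto; lra).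
  assert (Fs : is_fp p (xh + yh)).
  { replace (xh + yh) with (xh - - yh) by ring.
    apply (sterbenz p Hp); [auto | apply fp_opp; auto | split_Rabs; lra | split_Rabs; lra]. }
  unfold sloppy_relerr. rewrite (SloppyAdd_exact_sum p rn xh xl yh yl HRN) by auto.
  apply Rdiv_abs_le; [left; apply u_pos|].
  replace (xh + xl + yh + yl) with (xh + yh + xl + yl) by ring.
  destruct (Rtotal_order xh (- yh)) as [Hlt|[Heq|Hgt]].
  - set (z := Fast2Sum rn (xh + yh) (rn (xl + yl))).
    assert (Ez : Fast2Sum (rn_opp rn) (- yh + - xh) (rn_opp rn (- yl + - xl)) = (- fst z, - snd z)).
    { unfold z. rewrite <- Fast2Sum_rn_opp. f_equal; [ring | unfold rn_opp; do 2 f_equal; ring]. }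
    assert (Hnc' : ~ consecutive_fp p (- yh) (- - xh)).
    { rewrite Ropp_involutive. contradict Hnc. now apply consecutive_fp_sym. }
    pose proof (close_operands_error_pos p (rn_opp rn) (- yh) (- xh) (- yl) (- xl) Hp
      (is_RN_rn_opp p rn HRN) (fp_opp p _ Fyh) (fp_opp p _ Fxh)
      (rn_opp_double_word rn yh yl Ey) (rn_opp_double_word rn xh xl Ex)
      ltac:(lra) ltac:(lra) Hnc') as H.
    cbv zeta in H. rewrite Ez in H. cbn [fst snd] in H.
    replace (- fst z + - snd z - (- yh + - xh + - yl + - xl))
      with (- (fst z + snd z - (xh + yh + xl + yl))) in H by ring.
    replace (- yh + - xh + - yl + - xl) with (- (xh + yh + xl + yl)) in H by ring.
    now rewrite !Rabs_Ropp in H.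
  - replace (xh + yh) with 0 by lra. unfold Fast2Sum. cbn [fst snd].
    rewrite Rplus_0_l, Rminus_0_r, !(rn_exact p rn HRN (rn (xl + yl))) by apply (rn_fp p rn HRN).
    rewrite Rminus_diag, (rn_0 p rn HRN), Rplus_0_r, Rplus_0_l.
    apply (rn_rel_error p Hp rn HRN).
  - apply (close_operands_error_pos p rn xh yh xl yl); auto; lra.
Qed.

Theorem theorem3 :
  (exists (C : R) (p0 : nat), forall (p : nat), (p0 <= p)%nat ->
    forall rn : R -> R, is_RN p rn ->
    forall xh xl yh yl : R,
      is_fp p xh -> is_fp p xl -> is_fp p yh -> is_fp p yl ->
      rn (xh + xl) = xh -> rn (yh + yl) = yh -> xh * yh < 0 ->
      rr xh yh <= 1 / 2 ->
      sloppy_relerr rn xh xl yh yl <= 3 * u p ^ 2 + C * u p ^ 3)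
  /\
  (forall (p : nat), (2 <= p)%nat ->
    forall rn : R -> R, is_RN p rn ->
    (ties_to_even p rn \/ ties_to_away p rn) ->
    forall xh xl yh yl : R,
      is_fp p xh -> is_fp p xl -> is_fp p yh -> is_fp p yl ->
      rn (xh + xl) = xh -> rn (yh + yl) = yh -> xh * yh < 0 ->
      rr xh yh > 1 / 2 ->
      ~ consecutive_fp p (Rabs xh) (Rabs yh) ->
      sloppy_relerr rn xh xl yh yl <= u p).
Proof.
  split.
  - exists 24, 4%nat. intros p Hp rn HRN xh xl yh yl Fxh _ Fyh _ Ex Ey Hxy Hr.
    destruct (Rmult_neg_cases _ _ Hxy) as [[Hx Hy]|[Hx Hy]].
    + now apply sloppy_relerr_mild_pos.
    + rewrite <- sloppy_relerr_rn_opp.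
      apply sloppy_relerr_mild_pos; auto using is_RN_rn_opp, fp_opp, rn_opp_double_word;
        [lra | lra | now rewrite rr_opp].
  - intros p Hp rn HRN _ xh xl yh yl Fxh _ Fyh _ Ex Ey Hxy Hr Hnc.
    assert (Hp1 : (1 <= p)%nat) by lia.
    destruct (Rmult_neg_cases _ _ Hxy) as [[Hx Hy]|[Hx Hy]].
    + apply sloppy_relerr_close_pos; auto.
      now rewrite (Rabs_pos_eq xh), (Rabs_left yh) in Hnc by lra.
    + rewrite <- sloppy_relerr_rn_opp.
      apply sloppy_relerr_close_pos; auto using is_RN_rn_opp, fp_opp, rn_opp_double_word;
        [lra | lra | now rewrite rr_opp |].
      rewrite Ropp_involutive.
      now rewrite (Rabs_left xh), (Rabs_pos_eq yh) in Hnc by lra.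
Qed.
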